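(* Let $n_x,n_y,n_z$ be pairwise relatively prime positive integers and let $K$ and $K'$ be Lissajous knots with frequencies $(n_x,n_y,n_z)$, $\phi_x=0$, and phase shift pairs $(\phi_y,\phi_z)$ and $(\phi_y',\phi_z')$ respectively. (1) Suppose $(\phi_y,\phi_z)$ and $(\phi_y',\phi_z')$ lie in two adjacent regions of the phase torus separated by a diagonal line $L$ given by $\phi_z=\frac{n_z}{n_y}\phi_y+l\frac{\pi}{n_y}$ ($l\in\mathbb{Z}$). Then the $xy$-diagrams of $K$ and $K'$ differ exactly by changing all Type I crossings with parameters $(k,j)$ such that $jn_z+l\equiv 0 \pmod{n_y}$, and the number of such crossings is $n_x-1$. (2) Suppose $(\phi_y,\phi_z)$ and $(\phi_y',\phi_z')$ lie in two adjacent regions of the phase torus separated by a horizontal line $L$ given by $\phi_z=l\frac{\pi}{n_x}$ ($l\in\mathbb{Z}$). Then the $xy$-diagrams of $K$ and $K'$ differ exactly by changing all Type II crossings with parameters $(k,j)$ such that $jn_z+l\equiv 0\pmod{n_x}$, and the number of such crossings is $n_y-1$.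
   Context: A Lissajous knot with frequencies $(n_x,n_y,n_z)$ (pairwise relatively prime integers) and phase shifts $(\phi_x,\phi_y,\phi_z)$ is the curve $K(t)=(\cos(n_xt+\phi_x),\cos(n_yt+\phi_y),\cos(n_zt+\phi_z))$, $0\le t\le2\pi$, when it is embedded. Take $\phi_x=0$. The phase torus is the torus of pairs $(\phi_y,\phi_z)\in[0,2\pi]\times[0,2\pi]$; the curve fails to be embedded exactly on the singular lines $\phi_z=\frac{n_z}{n_y}\phi_y+l\frac{\pi}{n_y}$, $\phi_z=l\frac{\pi}{n_x}$, $\phi_y=l\frac{\pi}{n_x}$ ($l\in\mathbb{Z}$), and the regions of the phase torus are the connected components of the complement of these lines. The crossings of the projection of $K$ to the $xy$-plane correspond to pairs of parameters $(t_1,t_2)$ of two types. Type I: for $1\le k\le n_x-1$ and integers $j$ with $1+\lfloor \frac{n_y}{n_x}k+\frac{\phi_y}{\pi}\rfloor\le j\le \lfloor 2n_y-\frac{n_y}{n_x}k+\frac{\phi_y}{\pi}\rfloor$, $(t_1,t_2)=\big((-\frac{k}{n_x}+\frac{j}{n_y})\pi-\frac{\phi_y}{n_y},(\frac{k}{n_x}+\frac{j}{n_y})\pi-\frac{\phi_y}{n_y}\big)$. Type II: for $1\le k\le n_y-1$ and integers $j$ with $1+\lfloor\frac{n_x}{n_y}k\rfloor\le j\le\lfloor 2n_x-\frac{n_x}{n_y}k\rfloor$, $(t_1,t_2)=\big((-\frac{k}{n_y}+\frac{j}{n_x})\pi,(\frac{k}{n_y}+\frac{j}{n_x})\pi\big)$.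 The pair $(k,j)$ is called the parameters of the crossing. ''Changing a crossing'' means switching which strand is over and which is under. *)

From HB Require Import structures.
From mathcomp Require Import all_boot all_order all_algebra.
From mathcomp Require Import all_classical all_reals all_analysis.
Set Implicit Arguments. Unset Strict Implicit. Unset Printing Implicit Defensive.
Import Order.TTheory GRing.Theory Num.Theory.
Import numFieldNormedType.Exports.
Local Open Scope classical_set_scope.
Local Open Scope ring_scope.

Section Lissajous.
Variable R : realType.

(* A point of the phase torus is a pair (phi_y, phi_z); phi_x = 0. *)
Definition in_torus (p : R * R) : Prop :=
  0 <= p.1 <= 2 * pi /\ 0 <= p.2 <= 2 * pi.

Definition diag_line (ny nz : nat) (l : int) : set (R * R) :=
  [set p | p.2 = nz%:R / ny%:R * p.1 + l%:~R * pi / ny%:R].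
Definition horiz_line (nx : nat) (l : int) : set (R * R) :=
  [set p | p.2 = l%:~R * pi / nx%:R].
Definition vert_line (nx : nat) (l : int) : set (R * R) :=
  [set p | p.1 = l%:~R * pi / nx%:R].

Definition singular (nx ny nz : nat) : set (R * R) :=
  [set p | exists l : int,
     diag_line ny nz l p \/ horiz_line nx l p \/ vert_line nx l p].

Definition same_region (S : set (R * R)) (p q : R * R) : Prop :=
  exists C : set (R * R), connected C /\ C `<=` ~` S /\ C p /\ C q.

Definition region (S : set (R * R)) (p : R * R) : set (R * R) :=
  [set q | same_region S p q].

(* p and q lie in two distinct regions (components of the complement of S)
   which are adjacent along the line L: both regions accumulate at a point m
   of L near which the singular set S consists of L only. *)
Definition adjacent_across (S L : set (R * R)) (p q : R * R) : Prop :=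
  ~ S p /\ ~ S q /\ ~ same_region S p q /\
  exists m : R * R, L m /\ (\forall x \near m, S x -> L x) /\
    closure (region S p) m /\ closure (region S q) m.

(* z-coordinate of the Lissajous curve with phase phi_z. *)
Definition lz (nz : nat) (phz t : R) : R := cos (nz%:R * t + phz).

Definition tI1 (nx ny : nat) (phy : R) (k : nat) (j : int) : R :=
  (- (k%:R / nx%:R) + j%:~R / ny%:R) * pi - phy / ny%:R.
Definition tI2 (nx ny : nat) (phy : R) (k : nat) (j : int) : R :=
  (k%:R / nx%:R + j%:~R / ny%:R) * pi - phy / ny%:R.
Definition validI (nx ny : nat) (phy : R) (k : nat) (j : int) : bool :=
  [&& (1 <= k)%N, (k <= nx - 1)%N,
      1 + Num.floor (ny%:R / nx%:R * k%:R + phy / pi) <= j &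
      j <= Num.floor (2 * ny%:R - ny%:R / nx%:R * k%:R + phy / pi)].
(* true iff the strand with parameter t1 is the over-strand *)
Definition overI (nx ny nz : nat) (phy phz : R) (k : nat) (j : int) : bool :=
  lz nz phz (tI2 nx ny phy k j) < lz nz phz (tI1 nx ny phy k j).

Definition tII1 (nx ny : nat) (k : nat) (j : int) : R :=
  (- (k%:R / ny%:R) + j%:~R / nx%:R) * pi.
Definition tII2 (nx ny : nat) (k : nat) (j : int) : R :=
  (k%:R / ny%:R + j%:~R / nx%:R) * pi.
Definition validII (nx ny : nat) (k : nat) (j : int) : bool :=
  [&& (1 <= k)%N, (k <= ny - 1)%N,
      1 + Num.floor (nx%:R / ny%:R * k%:R : R) <= j &
      j <= Num.floor (2 * nx%:R - nx%:R / ny%:R * k%:R : R)].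
Definition overII (nx ny nz : nat) (phz : R) (k : nat) (j : int) : bool :=
  lz nz phz (tII2 nx ny k j) < lz nz phz (tII1 nx ny k j).

End Lissajous.

From HB Require Import structures.
From mathcomp Require Import all_boot all_order all_algebra.
From mathcomp Require Import all_classical all_reals all_analysis.
From mathcomp Require Import zify ring lra.
Import Order.TTheory GRing.Theory Num.Theory.
Import numFieldNormedType.Exports.
Local Open Scope classical_set_scope.
Local Open Scope ring_scope.

Set Implicit Arguments. Unset Strict Implicit. Unset Printing Implicit Defensive.

(** The three families of singular lines are the integer level sets of the
    linear forms [(n_y phi_z - n_z phi_y)/pi], [n_x phi_z/pi] and [n_x phi_y/pi]
    on the phase torus.  Writing a crossing as [n_z t_{1,2} + phi_z = theta -+ delta],
    its sign is that of [sin theta * sin delta]; the factor [sin delta] is nonzero and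
    independent of the phases by coprimality, and [sin theta > 0] iff
    [floor ((j n_z + floor u) / n)] is even, where [u] is the first form (Type I,
    [n = n_y]) or the second one (Type II, [n = n_x]); the range of admissible [j]
    only depends on the floor of the third form.  Crossing the line [u = l] into an
    adjacent region moves [floor u] between [l - 1] and [l] and leaves the floors of
    the two transverse forms unchanged, which flips the parity exactly when
    [n | j n_z + l].  For fixed [k] the admissible [j] form an interval, and the
    intervals for [k] and [n_x - k] (resp. [n_y - k]) fill [2 n] consecutive
    integers up to a shift by [n], so each such pair contains two solutions of the
    congruence. *)

Section PhaseForms.
Variable R : realType.

Lemma pi_neq0 : (pi : R) != 0.
Proof. by rewrite gt_eqF // pi_gt0. Qed.

Lemma connected_side_eq {T : topologicalType} {C : set T} {f : T -> R} {l : R} {p y : T} :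
  continuous f -> connected C -> (forall x, C x -> f x != l) -> C p -> C y ->
  (l < f p) = (l < f y).
Proof.
move=> cf cC Cnl Cp Cy.
have /connected_intervalP iC := connected_continuous_connected cC (continuous_subspaceT cf).
suff no_cross u v : C u -> C v -> f u < l -> l < f v -> False.
  have fpl := Cnl _ Cp; have fyl := Cnl _ Cy.
  case: (ltrP l (f p)) => hp; case: (ltrP l (f y)) => hy //.
  - by case: (no_cross _ _ Cy Cp _ hp); rewrite lt_neqAle hy fyl.
  - by case: (no_cross _ _ Cp Cy _ hy); rewrite lt_neqAle hp fpl.
move=> Cu Cv ful lfv.
have [c Cc fcl] : (f @` C) l.
  by apply: (iC (f u) (f v)); [exists u|exists v|rewrite (ltW ful) (ltW lfv)].
by move: (Cnl _ Cc); rewrite fcl eqxx.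
Qed.

Lemma closure_region_side (S : set (R * R)) (f : R * R -> R) (l : R) p m :
  continuous f -> (forall x, f x = l -> S x) -> ~ S p ->
  closure (region S p) m -> f m != l -> (l < f p) = (l < f m).
Proof.
move=> cf fS nSp clm fml.
have nb : nbhs m (f @^-1` ball (f m) `|f m - l|).
  by apply: cf; apply: nbhsx_ballx; rewrite normr_gt0 subr_eq0.
have [y [[C [cC [CS [Cp Cy]]]]]] := clm _ nb.
rewrite /preimage /ball /= => near_fm.
rewrite (connected_side_eq cf cC _ Cp Cy); last by move=> x Cx; apply/eqP => /fS; exact: CS.
have := ler_norm (f m - f y); have := ler_norm (f y - f m); rewrite distrC => h1 h2.
have [lfm|fml'] : l < f m \/ f m < l by move: fml; rewrite neq_lt => /orP[]; [right|left].
- rewrite (@gtr0_norm _ (f m - l)) ?subr_gt0 // in near_fm.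
  have -> : l < f y by lra.
  by rewrite lfm.
- rewrite (@ltr0_norm _ (f m - l)) ?subr_lt0 // in near_fm.
  have /lt_gtF -> : f y < l by lra.
  by rewrite (lt_gtF fml').
Qed.

Definition ray (x v : R * R) (t : R) : R * R := (x.1 + t * v.1, x.2 + t * v.2).

Definition interp (p q : R * R) : R -> R * R := ray p (q.1 - p.1, q.2 - p.2).

Lemma continuous_ray x v : continuous (ray x v).
Proof.
move=> t; have coord a b : (a + t * b) @[t --> t] --> a + t * b.
  by apply: cvgD; [exact: cvg_cst|apply: cvgMl; exact: cvg_id].
exact: cvg_pair (coord _ _) (coord _ _).
Qed.

Lemma ray0 x v : ray x v 0 = x.
Proof. by case: x => a b; rewrite /ray /= !mul0r !addr0. Qed.

Lemma interp1 p q : interp p q 1 = q.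
Proof. by case: p; case: q => a b c d; rewrite /interp /ray /= !mul1r !subrKC. Qed.

Lemma connected_interp p q : connected (interp p q @` `[0, 1]).
Proof.
apply: connected_continuous_connected; first exact: segment_connected.
exact/continuous_subspaceT/continuous_ray.
Qed.

Lemma near_ray (P : set (R * R)) (m v : R * R) :
  (\forall x \near m, P x) -> exists2 e : R, 0 < e & P (ray m v e).
Proof.
move=> Pm.
have : \forall t \near (0 : R), P (ray m v t).
  by apply: (@continuous_ray m v 0); rewrite ray0.
move=> /nbhs_ballP [e /= e0 He]; exists (e / 2); first by rewrite divr_gt0.
apply: He; rewrite /ball /= sub0r normrN gtr0_norm ?divr_gt0 //; lra.
Qed.

Definition phase_form (f x : R * R) : R := (f.1 * x.1 + f.2 * x.2) / pi.

Lemma continuous_phase_form f : continuous (phase_form f).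
Proof.
move=> x; apply: cvgMl; apply: cvgD; apply: cvgMr; [exact: cvg_fst|exact: cvg_snd].
Qed.

Lemma phase_form_ray f x v t :
  phase_form f (ray x v t) = phase_form f x + t * (f.1 * v.1 + f.2 * v.2) / pi.
Proof.
rewrite /phase_form /ray /=; move: pi_neq0; move: (pi : R) => P P0.
by field.
Qed.

Lemma phase_form_interp f p q t :
  phase_form f (interp p q t) = (1 - t) * phase_form f p + t * phase_form f q.
Proof.
rewrite phase_form_ray /phase_form /=; move: pi_neq0; move: (pi : R) => P P0.
by field.
Qed.

Lemma interp_same_side f (l : R) p q t : 0 <= t <= 1 ->
  (l < phase_form f p) = (l < phase_form f q) ->
  phase_form f p != l -> phase_form f q != l -> phase_form f (interp p q t) != l.
Proof.
rewrite phase_form_interp => /andP[t0 t1] same fpl fql.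
set a := phase_form f p in same fpl *; set b := phase_form f q in same fql *.
apply/eqP => convex_l.
have [la|al] : l < a \/ a < l by move: fpl; rewrite neq_lt => /orP[]; [right|left].
- have lb : l < b by rewrite -same.
  by case: (lerP a b) => ab; nra.
- have bl : b < l by rewrite lt_neqAle fql leNgt -same lt_gtF.
  by case: (lerP a b) => ab; nra.
Qed.

End PhaseForms.

Section Floors.
Variable R : realType.
Implicit Types (u v : R) (l : int).

Lemma notint_neq_intr u l : u \isn't a Num.int -> u != l%:~R.
Proof. by apply: contraNneq => ->; exact: intr_int. Qed.

Lemma floor_eq_of_sides u v : u \isn't a Num.int -> v \isn't a Num.int ->
  (forall l, (l%:~R < u) = (l%:~R < v)) -> Num.floor u = Num.floor v.
Proof.
suff le_floor_sides (w w' : R) : w \isn't a Num.int -> (forall l, (l%:~R < w) = (l%:~R < w')) ->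
    Num.floor w <= Num.floor w'.
  by move=> uZ vZ sides; apply: le_anti; rewrite !le_floor_sides // => l; rewrite sides.
move=> wZ sides; rewrite floor_ge_int; apply: ltW; rewrite -sides.
by rewrite lt_neqAle floor_le andbT eq_sym notint_neq_intr.
Qed.

Definition straddle l u v :=
  (Num.floor u = l - 1 /\ Num.floor v = l) \/ (Num.floor u = l /\ Num.floor v = l - 1).

Lemma straddleC l u v : straddle l u v -> straddle l v u.
Proof. by case=> -[]; [right|left]. Qed.

Lemma straddle_of_sides l u v : u \isn't a Num.int -> v \isn't a Num.int ->
  (forall l', l' != l -> (l'%:~R < u) = (l'%:~R < v)) ->
  (l%:~R < u) != (l%:~R < v) -> straddle l u v.
Proof.
wlog lu : u v / l%:~R < u.
  move=> wlog uZ vZ sides ne.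
  case/orP: (orbN (l%:~R < u)) => [lu|nlu]; first exact: wlog.
  apply: straddleC; apply: wlog => //; last by rewrite eq_sym.
    by move: ne; rewrite (negbTE nlu); case: (l%:~R < v).
  by move=> l' /sides.
move=> uZ vZ sides; rewrite lu eq_sym eqb_id => /negbTE vl.
have vl' : v < l%:~R by rewrite lt_neqAle notint_neq_intr // leNgt vl.
right; split; apply/eqP; rewrite floor_eq.
- rewrite (ltW lu) /= ltNge le_eqVlt negb_or eq_sym notint_neq_intr //= sides.
    by rewrite -leNgt ltW // (lt_trans vl') // ltr_int; lia.
  lia.
- rewrite subrK vl' andbT ltW // -sides.
    by rewrite (lt_trans _ lu) // ltr_int; lia.
  lia.
Qed.

Lemma floor_div_floor (a : int) (n : nat) (u : R) : (0 < n)%N ->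
  Num.floor ((a%:~R + u) / n%:R) = ((a + Num.floor u) %/ n%:Z)%Z.
Proof.
move=> n0; have nR : (0 : R) < n%:R by rewrite ltr0n.
have nz0 : (0 < n%:Z)%R by rewrite ltz_nat.
set F := Num.floor u; set K := ((a + F) %/ n%:Z)%Z.
have /andP [Fu uF] := floor_itv u; rewrite -/F intrD in Fu uF.
have lo : K%:~R * n%:R <= a%:~R + F%:~R :> R.
  by rewrite pmulrn -intrM -intrD ler_int lez_floor // gt_eqF.
have hi : a%:~R + F%:~R + 1 <= (K + 1)%:~R * n%:R :> R.
  rewrite pmulrn -intrM -[1]/(1%:~R) -!intrD ler_int.
  by have := ltz_ceil (a + F) nz0; lia.
apply/eqP; rewrite floor_eq ler_pdivlMr // ltr_pdivrMr // intrD.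
by apply/andP; split; lra.
Qed.

End Floors.

Section Arrangements.
Variable R : realType.
Implicit Types (S L : set (R * R)) (f g h p q x : R * R).

Lemma adjacent_across_side S L f (l : R) p q :
  adjacent_across S L p q -> (forall x, phase_form f x = l -> S x) ->
  (forall m, L m -> (\forall x \near m, S x -> L x) -> phase_form f m != l) ->
  (l < phase_form f p) = (l < phase_form f q).
Proof.
move=> [nSp [nSq [_ [m [Lm [nearL [clp clq]]]]]]] fS off_m.
have cf : continuous (phase_form f) by exact: continuous_phase_form.
have fml := off_m m Lm nearL.
by rewrite (closure_region_side cf fS nSp clp fml) (closure_region_side cf fS nSq clq fml).
Qed.

Definition transverse f g := f.1 * g.2 != f.2 * g.1.

(* Moving away from [m] along the level line of [g] keeps us in [S], hence in [L];
   transversality makes [f] vary along that line, a contradiction. *)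
Lemma transverse_off_line S L f g (l l' : R) m :
  transverse f g -> (forall x, L x -> phase_form f x = l) ->
  (forall x, phase_form g x = l' -> S x) ->
  L m -> (\forall x \near m, S x -> L x) -> phase_form g m != l'.
Proof.
move=> fg Lf gS Lm nearL; apply/eqP => gm.
have [e e0 SL] := near_ray (g.2, - g.1) nearL.
have /Lf : L (ray m (g.2, - g.1) e).
  apply/SL/gS; rewrite phase_form_ray gm /=.
  have -> : g.1 * g.2 + g.2 * - g.1 = 0 by ring.
  by rewrite mulr0 mul0r addr0.
rewrite phase_form_ray (Lf _ Lm) => /(congr1 (fun y => y - l)) /eqP.
rewrite [l + _]addrC addrK subrr; apply/negP.
rewrite !mulf_eq0 invr_eq0 (negbTE (pi_neq0 R)) (gt_eqF e0) orbF /=.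
by rewrite mulrN subr_eq0.
Qed.

Definition arrangement f g h : set (R * R) :=
  [set x | exists l : int, [\/ phase_form f x = l%:~R, phase_form g x = l%:~R
                            | phase_form h x = l%:~R]].

Lemma arrangementCA f g h : arrangement f g h = arrangement g f h.
Proof.
by apply/seteqP; split=> x [l [e|e|e]]; exists l; by [apply: Or32|apply: Or31|apply: Or33].
Qed.

Lemma not_arrangement_int f g h x : ~ arrangement f g h x ->
  [/\ phase_form f x \isn't a Num.int, phase_form g x \isn't a Num.int
    & phase_form h x \isn't a Num.int].
Proof.
move=> nAx; split; apply/negP; rewrite intrEfloor => /eqP e; apply: nAx;
  eexists; [apply: Or31|apply: Or32|apply: Or33]; exact: esym e.
Qed.

Lemma same_region_of_sides f g h p q :
  ~ arrangement f g h p -> ~ arrangement f g h q ->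
  (forall l : int, [/\ (l%:~R < phase_form f p) = (l%:~R < phase_form f q),
                       (l%:~R < phase_form g p) = (l%:~R < phase_form g q)
                     & (l%:~R < phase_form h p) = (l%:~R < phase_form h q)]) ->
  same_region (arrangement f g h) p q.
Proof.
move=> nAp nAq sides; exists (interp p q @` `[0, 1]); split; first exact: connected_interp.
split; last by split; [exists 0; rewrite /interp ?ray0|exists 1; rewrite ?interp1];
  rewrite //= in_itv /= ?lexx ?ler01.
move=> _ [t t01 <-] [l hl]; rewrite /= in_itv /= in t01.
have [fp gp hp] := not_arrangement_int nAp; have [fq gq hq] := not_arrangement_int nAq.
have off k : phase_form k p \isn't a Num.int -> phase_form k q \isn't a Num.int ->
    (l%:~R < phase_form k p) = (l%:~R < phase_form k q) ->
    phase_form k (interp p q t) != l%:~R.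
  by move=> kp kq same; apply: interp_same_side; rewrite // notint_neq_intr.
by have [sf sg sh] := sides l; case: hl; apply/eqP; apply: off.
Qed.

Lemma adjacent_across_floors f g h L (l : int) p q :
  transverse f g -> transverse f h -> (forall x, L x -> phase_form f x = l%:~R) ->
  adjacent_across (arrangement f g h) L p q ->
  [/\ straddle l (phase_form f p) (phase_form f q),
      Num.floor (phase_form g p) = Num.floor (phase_form g q)
    & Num.floor (phase_form h p) = Num.floor (phase_form h q)].
Proof.
move=> fg fh Lf adj; have [nAp [nAq [apart _]]] := adj.
have [fpZ gpZ hpZ] := not_arrangement_int nAp.
have [fqZ gqZ hqZ] := not_arrangement_int nAq.
have side_transverse k (l' : int) : transverse f k ->
    (forall x, phase_form k x = l'%:~R -> arrangement f g h x) ->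
    (l'%:~R < phase_form k p) = (l'%:~R < phase_form k q).
  move=> fk kA; apply: (adjacent_across_side adj kA) => m Lm nearL.
  exact: transverse_off_line fk Lf kA Lm nearL.
have side_g l' : (l'%:~R < phase_form g p) = (l'%:~R < phase_form g q).
  by apply: side_transverse fg _ => x e; exists l'; apply: Or32.
have side_h l' : (l'%:~R < phase_form h p) = (l'%:~R < phase_form h q).
  by apply: side_transverse fh _ => x e; exists l'; apply: Or33.
have side_f l' : l' != l -> (l'%:~R < phase_form f p) = (l'%:~R < phase_form f q).
  move=> l'l; apply: (adjacent_across_side adj) => [x e|m Lm _].
    by exists l'; apply: Or31.
  by rewrite (Lf _ Lm) eqr_int eq_sym.
split; [|exact: floor_eq_of_sides..].
apply: straddle_of_sides => //; apply/negP => /eqP same_l; apply: apart.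
apply: same_region_of_sides => // l'; split => //.
by case: (eqVneq l' l) => [->|/side_f].
Qed.

End Arrangements.

Lemma divz_pred_parity (M n : int) : 0 < n ->
  ((2 %| ((M - 1) %/ n)%Z)%Z != (2 %| (M %/ n)%Z)%Z) = (n %| M)%Z.
Proof.
move=> n0; have nn0 : n != 0 by rewrite gt_eqF.
set Kp := ((M - 1) %/ n)%Z; set Kq := (M %/ n)%Z.
have lo_p : Kp * n <= M - 1 := lez_floor _ nn0.
have hi_p : M - 1 < (Kp + 1) * n := ltz_ceil _ n0.
have lo_q : Kq * n <= M := lez_floor _ nn0.
have hi_q : M < (Kq + 1) * n := ltz_ceil _ n0.
have Kpq : Kp < Kq + 1 by rewrite -(ltr_pM2r n0); lia.
have Kqp : Kq <= Kp + 1 by rewrite -(ler_pM2r n0); lia.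
have [eK|eK] : Kq = Kp \/ Kq = Kp + 1 by lia.
- rewrite eK eqxx; apply/esym/negP => /dvdzP [c Mc].
  have : Kp < c by rewrite -(ltr_pM2r n0); lia.
  have : c < Kp + 1 by rewrite -(ltr_pM2r n0); lia.
  lia.
- have -> : (n %| M)%Z by apply/dvdzP; exists Kq; lia.
  rewrite eK; lia.
Qed.

Section SinParity.
Variable R : realType.

Lemma sinDzpi (x : R) (K : int) : sin (x + K%:~R * pi) = (-1) ^+ `|K|%N * sin x.
Proof.
case: K => n.
  by rewrite /= -pmulrn mulr_natl (alternatingn (@sinDpi R)).
rewrite NegzE abszN absz_nat.
have := alternatingn (@sinDpi R) n.+1 (x + (- n.+1%:Z)%:~R * pi).
rewrite -addrA intrN mulNr -pmulrn mulr_natl addNr addr0 => ->.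
by rewrite mulrA -exprD -signr_odd oddD addbb expr0 mul1r.
Qed.

Lemma sin_gt0_parity (x : R) : x / pi \isn't a Num.int ->
  sin x != 0 /\ (0 < sin x) = (2 %| Num.floor (x / pi))%Z.
Proof.
move=> xZ; have pi0 := @pi_gt0 R.
set K := Num.floor (x / pi); set r := x - K%:~R * pi.
have /andP [Kx xK] := floor_itv (x / pi).
rewrite -/K ler_pdivlMr // in Kx; rewrite ltr_pdivrMr // intrD mulrDl mul1r in xK.
have r0 : 0 < r.
  rewrite subr_gt0 lt_neqAle Kx andbT; apply: contra xZ => /eqP <-.
  by rewrite mulfK ?pi_neq0 // intr_int.
have sin_r : 0 < sin r by apply: sin_gt0_pi; rewrite r0 /r; lra.
rewrite -(subrK (K%:~R * pi) x) -/r sinDzpi dvdzE /= dvdn2 -signr_odd.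
case: (odd `|K|%N) => /=.
  by rewrite expr1 mulN1r oppr_gt0 oppr_eq0 (gt_eqF sin_r) ltNge (ltW sin_r).
by rewrite expr0 mul1r (gt_eqF sin_r) sin_r.
Qed.

Lemma sin_phase_parity (a : int) (n : nat) (u : R) : (0 < n)%N ->
  u \isn't a Num.int ->
  sin ((a%:~R + u) / n%:R * pi) != 0 /\
  (0 < sin ((a%:~R + u) / n%:R * pi)) = (2 %| ((a + Num.floor u) %/ n%:Z)%Z)%Z.
Proof.
move=> n0 uZ; have nR : (n%:R : R) != 0 by rewrite pnatr_eq0 -lt0n.
rewrite -(floor_div_floor a u n0); have := @sin_gt0_parity ((a%:~R + u) / n%:R * pi).
rewrite mulfK ?pi_neq0 //; apply; apply: contra uZ => vZ.
have -> : u = (a%:~R + u) / n%:R * n%:R - a%:~R by rewrite divfK // addrC addKr.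
by apply: rpredB; [apply: rpredM|]; rewrite ?natr_int ?intr_int.
Qed.

Lemma cos_lt_cos_sin (th de : R) :
  (cos (th + de) < cos (th - de)) = (0 < sin th * sin de).
Proof.
rewrite cosD cosB -subr_gt0.
have -> : cos th * cos de + sin th * sin de - (cos th * cos de - sin th * sin de)
  = 2 * (sin th * sin de) by ring.
by rewrite pmulr_rgt0.
Qed.

Lemma mulr_gt0_sign (a c : R) : a != 0 -> c != 0 -> (0 < a * c) = ((0 < a) == (0 < c)).
Proof.
move=> a0 c0; have [c_pos|c_neg] : 0 < c \/ c < 0.
  by move: c0; rewrite neq_lt => /orP[]; [right|left].
  by rewrite pmulr_lgt0 // c_pos eqb_id.
by rewrite nmulr_lgt0 // (lt_gtF c_neg) eqbF_neg ltNge le_eqVlt eq_sym (negbTE a0).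
Qed.

End SinParity.

Lemma residue_class_coprime (M nz : nat) (l : int) : coprime M nz ->
  exists r : int, forall j : int,
    (j * nz%:Z + l == 0 %[mod M%:Z])%Z = (M%:Z %| j - r)%Z.
Proof.
move=> cop; have [u [v uv]] := Bezoutz nz%:Z M%:Z.
have bezout : u * nz%:Z + v * M%:Z = 1.
  by rewrite uv /gcdz /= gcdnC; move/eqP: cop => ->.
exists (- l * u) => j; rewrite eqz_mod_dvd subr0.
apply/idP/idP => dvdM.
  have -> : j - - l * u = (j * nz%:Z + l) * u + (j * v) * M%:Z.
    by rewrite -[j in LHS]mulr1 -bezout; ring.
  by apply: rpredD; [exact: dvdz_mulr|exact/dvdz_mull/dvdzz].
have -> : j * nz%:Z + l = (j - - l * u) * nz%:Z + (l * v) * M%:Z.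
  by rewrite -[l in LHS]mulr1 -bezout; ring.
by apply: rpredD; [exact: dvdz_mulr|exact/dvdz_mull/dvdzz].
Qed.

Section ResidueCount.
Variables (M : nat) (r : int).
Hypothesis M_gt0 : (0 < M)%N.

Definition window (A : int) (n : nat) : seq int := [seq A + i%:Z | i <- iota 1 n].

Definition residue_count (A : int) (n : nat) : nat :=
  count (fun j => M%:Z %| j - r)%Z (window A n).

Lemma mem_window (A j : int) n : (j \in window A n) = (A + 1 <= j <= A + n%:Z).
Proof.
apply/mapP/idP => [[i]|/andP[Aj jA]]; first by rewrite mem_iota => /andP[? ?] ->; lia.
by exists `|j - A|%N; [rewrite mem_iota; lia|lia].
Qed.

Lemma residue_countD A n1 n2 :
  residue_count A (n1 + n2) = (residue_count A n1 + residue_count (A + n1%:Z) n2)%N.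
Proof.
rewrite /residue_count /window iotaD map_cat count_cat; congr (_ + _)%N.
rewrite addnC iotaDl -map_comp; congr count; apply: eq_map => i /=.
by rewrite PoszD addrA.
Qed.

Lemma residue_count_periodic A n : residue_count (A + M%:Z) n = residue_count A n.
Proof.
rewrite /residue_count !count_map; apply: eq_count => i /=.
have -> : A + M%:Z + i%:Z - r = (A + i%:Z - r) + M%:Z by ring.
by rewrite (rpredDr _ (dvdzz _)).
Qed.

Lemma residue_count_period A : residue_count A M = 1%N.
Proof.
have M0 : 0 < M%:Z by lia.
set w := ((r - A - 1) %% M%:Z)%Z.
have w_ge0 : 0 <= w by apply: modz_ge0; lia.
have w_ltM : w < M%:Z by exact: ltz_pmod.
have hit : (M%:Z %| A + `|w|.+1%:Z - r)%Z.
  have -> : A + `|w|.+1%:Z - r = - (((r - A - 1) %/ M%:Z)%Z * M%:Z).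
    by have := divz_eq (r - A - 1) M%:Z; rewrite -/w; lia.
  by rewrite rpredN dvdz_mull.
rewrite /residue_count count_map (@eq_in_count _ _ (pred1 `|w|.+1)).
  by rewrite count_uniq_mem ?iota_uniq // mem_iota; apply/eqP; rewrite eqb1; lia.
move=> i; rewrite mem_iota => /andP[i1 iM] /=; apply/idP/eqP => [dvd_i|->//].
have : (M%:Z %| (A + i%:Z - r) - (A + `|w|.+1%:Z - r))%Z by rewrite rpredB.
have -> : A + i%:Z - r - (A + `|w|.+1%:Z - r) = i%:Z - `|w|.+1%:Z by ring.
rewrite dvdzE => /dvdn_leq; case: (eqVneq `|i%:Z - `|w|.+1%:Z|%N 0%N); lia.
Qed.

Variables (R : realType) (N : nat) (x : R).
Hypothesis N_gt0 : (0 < N)%N.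

Definition window_lo (k : nat) : int := Num.floor (M%:R / N%:R * k%:R + x).
Definition window_hi (k : nat) : int := Num.floor (2 * M%:R - M%:R / N%:R * k%:R + x).
Definition window_count (k : nat) : nat :=
  residue_count (window_lo k) `|window_hi k - window_lo k|%N.

Lemma window_lo_le_hi k : (k <= N)%N -> window_lo k <= window_hi k.
Proof.
move=> kN; apply: le_floor.
have : M%:R / N%:R * k%:R <= (M%:R : R).
  by rewrite mulrAC ler_pdivrMr ?ltr0n // ler_wpM2l // ler_nat.
lra.
Qed.

(* The windows for [k] and [N - k] fill [2 M] consecutive integers, up to a shift by [M]. *)
Lemma window_count_pair k : (0 < k < N)%N -> (window_count k + window_count (N - k))%N = 2%N.
Proof.
move=> /andP[k0 kN]; have NR : (N%:R : R) != 0 by rewrite pnatr_eq0 -lt0n.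
have floorDz (y : R) (z : int) : Num.floor (y + z%:~R) = Num.floor y + z.
  by rewrite floorDrz ?intr_int // intrKfloor.
set E := Num.floor (x - M%:R / N%:R * k%:R).
have lo' : window_lo (N - k) = E + M%:Z.
  by rewrite /window_lo -floorDz natrB ?(ltnW kN) // -pmulrn; congr Num.floor; field.
have hi : window_hi k = E + M%:Z + M%:Z.
  by rewrite /window_hi -!floorDz -pmulrn; congr Num.floor; field.
have hi' : window_hi (N - k) = window_lo k + M%:Z.
  rewrite /window_hi /window_lo -floorDz natrB ?(ltnW kN) // -pmulrn.
  by congr Num.floor; field.
have E_le : E <= window_lo k.
  apply: le_floor; have : (0 : R) <= M%:R / N%:R * k%:R by rewrite mulr_ge0.
  lra.
have le_hi : window_lo k <= E + M%:Z + M%:Z by rewrite -hi window_lo_le_hi // ltnW.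
rewrite /window_count lo' hi hi'.
have -> : window_lo k + M%:Z - (E + M%:Z) = window_lo k - E by ring.
rewrite residue_count_periodic.
set d1 := `|window_lo k - E|%N; set d2 := `|(E + M%:Z + M%:Z - window_lo k)%R|%N.
have lo_E : window_lo k = E + d1%:Z by rewrite /d1 gez0_abs; lia.
have d12 : (d1 + d2 = M + M)%N by rewrite /d1 /d2; lia.
by rewrite addnC lo_E -residue_countD d12 residue_countD !residue_count_period.
Qed.

Lemma sum_window_count : (\sum_(1 <= k < N) window_count k)%N = (N - 1)%N.
Proof.
suff : (2 * \sum_(1 <= k < N) window_count k = 2 * (N - 1))%N by lia.
rewrite mul2n -addnn {2}big_nat_rev -big_split /=.
rewrite (@eq_big_nat _ _ _ 1 N _ (fun _ => 2%N)) => [|i /andP[i1 iN]].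
  by rewrite sum_nat_const_nat mul2n muln2.
by rewrite (_ : 1 + N - i.+1 = N - i)%N ?window_count_pair //; lia.
Qed.

Lemma residue_pairs_count : exists s : seq (nat * int),
  [/\ uniq s,
      forall c, (c \in s) =
        [&& (1 <= c.1)%N, (c.1 <= N - 1)%N, 1 + window_lo c.1 <= c.2
          & c.2 <= window_hi c.1] && (M%:Z %| c.2 - r)%Z
    & size s = (N - 1)%N].
Proof.
pose js k := [seq j <- window (window_lo k) `|window_hi k - window_lo k|%N | (M%:Z %| j - r)%Z].
exists [seq (k, j) | k <- iota 1 (N - 1), j <- js k]; split.
- apply: allpairs_uniq_dep => [|k _|[k1 j1] [k2 j2] _ _ /= [-> ->]] //; first exact: iota_uniq.
  by rewrite filter_uniq // map_inj_uniq ?iota_uniq // => i1 i2 /addrI [].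
- move=> [k j] /=; apply/allpairsPdep/idP => [[k' [j' [+ + [-> ->]]]]|].
    rewrite mem_iota mem_filter mem_window => /andP[k1 kN] /andP[-> /andP[lo_j j_hi]].
    by have := window_lo_le_hi (_ : k' <= N)%N; lia.
  move=> /andP[/and4P[k1 kN lo_j j_hi] Pj]; exists k, j; split => //.
    by rewrite mem_iota; lia.
  rewrite mem_filter Pj mem_window /=.
  by have := window_lo_le_hi (_ : k <= N)%N; lia.
- rewrite size_allpairs_dep sumnE big_map -[in RHS]sum_window_count.
  by apply: eq_bigr => k _; rewrite size_filter.
Qed.

End ResidueCount.

Section CrossingSigns.
Variable R : realType.

Lemma crossing_sign_flip (n : nat) (a l : int) (u v s : R) : (0 < n)%N ->
  u \isn't a Num.int -> v \isn't a Num.int -> s != 0 -> straddle l u v ->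
  ((0 < sin ((a%:~R + u) / n%:R * pi) * s) != (0 < sin ((a%:~R + v) / n%:R * pi) * s))
  = (n%:Z %| a + l)%Z.
Proof.
move=> n0 uZ vZ s0 luv; have n0' : 0 < n%:Z by rewrite ltz_nat.
have [su pu] := sin_phase_parity a n0 uZ; have [sv pv] := sin_phase_parity a n0 vZ.
rewrite !mulr_gt0_sign // pu pv -(divz_pred_parity (a + l) n0').
case: (0 < s); rewrite ?eqb_id ?eqbF_neg ?(inj_eq negb_inj).
all: by case: luv => -[-> ->]; rewrite addrA // [in RHS]eq_sym.
Qed.

Lemma crossing_sign_eq (n : nat) (a : int) (u v s : R) : (0 < n)%N ->
  u \isn't a Num.int -> v \isn't a Num.int -> s != 0 -> Num.floor u = Num.floor v ->
  (0 < sin ((a%:~R + u) / n%:R * pi) * s) = (0 < sin ((a%:~R + v) / n%:R * pi) * s).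
Proof.
move=> n0 uZ vZ s0 uv.
have [su pu] := sin_phase_parity a n0 uZ; have [sv pv] := sin_phase_parity a n0 vZ.
by rewrite !mulr_gt0_sign // pu pv uv.
Qed.

Lemma sin_coprime_neq0 (N m k : nat) : coprime N m -> (0 < k < N)%N ->
  sin ((m * k)%:R / N%:R * pi : R) != 0.
Proof.
move=> cop /andP[k0 kN]; have NR : (N%:R : R) != 0 by rewrite pnatr_eq0 -lt0n; lia.
have [//|] := @sin_gt0_parity R ((m * k)%:R / N%:R * pi); rewrite mulfK ?pi_neq0 //.
apply/negP; rewrite intrEfloor => /eqP e.
have mkN : (m * k)%N = (Num.floor ((m * k)%:R / N%:R : R) * N%:Z)%R :> int.
  by apply: (@intr_inj R); rewrite intrM e -!pmulrn divfK.
have : (N %| m * k)%N by rewrite -(@dvdzE N (m * k)) mkN dvdz_mull.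
by rewrite Gauss_dvdr // => /(dvdn_leq k0); lia.
Qed.

End CrossingSigns.

Section LissajousPhases.
Variable R : realType.
Variables nx ny nz : nat.
Hypotheses (nx_gt0 : (0 < nx)%N) (ny_gt0 : (0 < ny)%N) (nz_gt0 : (0 < nz)%N).

Let nxR : (nx%:R : R) != 0. Proof. by rewrite pnatr_eq0 -lt0n. Qed.
Let nyR : (ny%:R : R) != 0. Proof. by rewrite pnatr_eq0 -lt0n. Qed.
Let nzR : (nz%:R : R) != 0. Proof. by rewrite pnatr_eq0 -lt0n. Qed.

Definition diag_form : R * R := (- nz%:R, ny%:R).
Definition horiz_form : R * R := (0, nx%:R).
Definition vert_form : R * R := (nx%:R, 0).

Lemma diag_lineE (l : int) x : diag_line ny nz l x <-> phase_form diag_form x = l%:~R.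
Proof.
rewrite /diag_line /phase_form /=; move: (pi_neq0 R); move: (pi : R) => P P0.
by split=> [->|<-]; field; rewrite P0 ?nxR ?nyR.
Qed.

Lemma horiz_lineE (l : int) x : horiz_line nx l x <-> phase_form horiz_form x = l%:~R.
Proof.
rewrite /horiz_line /phase_form /=; move: (pi_neq0 R); move: (pi : R) => P P0.
by split=> [->|<-]; field; rewrite P0 ?nxR ?nyR.
Qed.

Lemma vert_lineE (l : int) x : vert_line nx l x <-> phase_form vert_form x = l%:~R.
Proof.
rewrite /vert_line /phase_form /=; move: (pi_neq0 R); move: (pi : R) => P P0.
by split=> [->|<-]; field; rewrite P0 ?nxR ?nyR.
Qed.

Lemma singular_arrangement :
  singular nx ny nz = arrangement diag_form horiz_form vert_form.
Proof.
apply/seteqP; split=> x [l Lx]; exists l.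
  by case: Lx => [/diag_lineE|[/horiz_lineE|/vert_lineE]]; [apply: Or31|apply: Or32|apply: Or33].
by case: Lx => [/diag_lineE|/horiz_lineE|/vert_lineE]; auto.
Qed.

Lemma transverse_diag_horiz : transverse diag_form horiz_form.
Proof. by rewrite /transverse /= mulr0 mulNr oppr_eq0 mulf_neq0. Qed.

Lemma transverse_diag_vert : transverse diag_form vert_form.
Proof. by rewrite /transverse /= mulr0 eq_sym mulf_neq0. Qed.

Lemma transverse_horiz_diag : transverse horiz_form diag_form.
Proof. by rewrite /transverse /= mul0r mulrN eq_sym oppr_eq0 mulf_neq0. Qed.

Lemma transverse_horiz_vert : transverse horiz_form vert_form.
Proof. by rewrite /transverse /= mul0r eq_sym mulf_neq0. Qed.

Lemma overI_sin p k j : overI nx ny nz p.1 p.2 k j =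
  (0 < sin (((nz%:Z * j)%:~R + phase_form diag_form p) / ny%:R * pi) *
       sin ((nz * k)%:R / nx%:R * pi)).
Proof.
rewrite /overI /lz -cos_lt_cos_sin; congr (cos _ < cos _);
  rewrite /tI1 /tI2 /phase_form /= intrM natrM -!pmulrn;
  by move: (pi_neq0 R); move: (pi : R) => P P0; field; rewrite P0 nxR nyR.
Qed.

Lemma overII_sin p k j : overII nx ny nz p.2 k j =
  (0 < sin (((nz%:Z * j)%:~R + phase_form horiz_form p) / nx%:R * pi) *
       sin ((nz * k)%:R / ny%:R * pi)).
Proof.
rewrite /overII /lz -cos_lt_cos_sin; congr (cos _ < cos _);
  rewrite /tII1 /tII2 /phase_form /= intrM natrM -!pmulrn;
  by move: (pi_neq0 R); move: (pi : R) => P P0; field; rewrite P0 nxR nyR.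
Qed.

Lemma validI_floor_eq p q k j :
  Num.floor (phase_form vert_form p) = Num.floor (phase_form vert_form q) ->
  validI nx ny p.1 k j = validI nx ny q.1 k j.
Proof.
have lo x : ny%:R / nx%:R * k%:R + x.1 / pi
    = (((ny * k)%:Z)%:~R + phase_form vert_form x) / nx%:R.
  rewrite /phase_form -pmulrn natrM /=; move: (pi_neq0 R); move: (pi : R) => P P0.
  by field; rewrite P0 nxR.
have hi x : 2 * ny%:R - ny%:R / nx%:R * k%:R + x.1 / pi
    = (((2 * ny * nx)%:Z - (ny * k)%:Z)%:~R + phase_form vert_form x) / nx%:R.
  rewrite /phase_form intrB -!pmulrn !natrM /=; move: (pi_neq0 R); move: (pi : R) => P P0.
  by field; rewrite P0 nxR.
by move=> pq; rewrite /validI !lo !hi !floor_div_floor // pq.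
Qed.

Lemma overI_flip (l : int) p q k j : coprime nx nz -> (0 < k < nx)%N ->
  phase_form diag_form p \isn't a Num.int -> phase_form diag_form q \isn't a Num.int ->
  straddle l (phase_form diag_form p) (phase_form diag_form q) ->
  (overI nx ny nz p.1 p.2 k j != overI nx ny nz q.1 q.2 k j)
  = (j * nz%:Z + l == 0 %[mod ny%:Z])%Z.
Proof.
move=> cop kx pZ qZ flip; rewrite !overI_sin (crossing_sign_flip _ _ _ _ _ flip) //.
  by rewrite eqz_mod_dvd subr0 mulrC.
exact: sin_coprime_neq0.
Qed.

Lemma overI_stable p q k j : coprime nx nz -> (0 < k < nx)%N ->
  phase_form diag_form p \isn't a Num.int -> phase_form diag_form q \isn't a Num.int ->
  Num.floor (phase_form diag_form p) = Num.floor (phase_form diag_form q) ->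
  overI nx ny nz p.1 p.2 k j = overI nx ny nz q.1 q.2 k j.
Proof.
move=> cop kx pZ qZ pq; rewrite !overI_sin.
by apply: crossing_sign_eq => //; exact: sin_coprime_neq0.
Qed.

Lemma overII_flip (l : int) p q k j : coprime ny nz -> (0 < k < ny)%N ->
  phase_form horiz_form p \isn't a Num.int -> phase_form horiz_form q \isn't a Num.int ->
  straddle l (phase_form horiz_form p) (phase_form horiz_form q) ->
  (overII nx ny nz p.2 k j != overII nx ny nz q.2 k j)
  = (j * nz%:Z + l == 0 %[mod nx%:Z])%Z.
Proof.
move=> cop ky pZ qZ flip; rewrite !overII_sin (crossing_sign_flip _ _ _ _ _ flip) //.
  by rewrite eqz_mod_dvd subr0 mulrC.
exact: sin_coprime_neq0.
Qed.

Lemma overII_stable p q k j : coprime ny nz -> (0 < k < ny)%N ->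
  phase_form horiz_form p \isn't a Num.int -> phase_form horiz_form q \isn't a Num.int ->
  Num.floor (phase_form horiz_form p) = Num.floor (phase_form horiz_form q) ->
  overII nx ny nz p.2 k j = overII nx ny nz q.2 k j.
Proof.
move=> cop ky pZ qZ pq; rewrite !overII_sin.
by apply: crossing_sign_eq => //; exact: sin_coprime_neq0.
Qed.

Lemma typeI_congruence_count (l : int) (phy : R) : coprime ny nz ->
  exists s : seq (nat * int), uniq s /\
    (forall c, (c \in s) =
       validI nx ny phy c.1 c.2 && (c.2 * nz%:Z + l == 0 %[mod ny%:Z])%Z) /\
    size s = (nx - 1)%N.
Proof.
move=> cop; have [r Er] := residue_class_coprime l cop.
have [s [us ms ss]] := residue_pairs_count r ny_gt0 (phy / pi) nx_gt0.
by exists s; split=> //; split=> // c; rewrite ms Er.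
Qed.

Lemma typeII_congruence_count (l : int) : coprime nx nz ->
  exists s : seq (nat * int), uniq s /\
    (forall c, (c \in s) =
       validII R nx ny c.1 c.2 && (c.2 * nz%:Z + l == 0 %[mod nx%:Z])%Z) /\
    size s = (ny - 1)%N.
Proof.
move=> cop; have [r Er] := residue_class_coprime l cop.
have [s [us ms ss]] := residue_pairs_count r nx_gt0 (0 : R) ny_gt0.
by exists s; split=> //; split=> // c; rewrite ms Er /window_lo /window_hi !addr0.
Qed.

End LissajousPhases.

Theorem proposition1 (R : realType) (nx ny nz : nat) :
  (0 < nx)%N -> (0 < ny)%N -> (0 < nz)%N ->
  coprime nx ny -> coprime ny nz -> coprime nx nz ->
  (forall (l : int) (p q : R * R),
     in_torus p -> in_torus q ->
     adjacent_across (singular nx ny nz) (diag_line ny nz l) p q ->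
     (forall k j, validI nx ny p.1 k j = validI nx ny q.1 k j) /\
     (forall k j, validI nx ny p.1 k j ->
        (overI nx ny nz p.1 p.2 k j != overI nx ny nz q.1 q.2 k j)
        = (j * nz%:Z + l == 0 %[mod ny%:Z])%Z) /\
     (forall k j, validII R nx ny k j ->
        overII nx ny nz p.2 k j = overII nx ny nz q.2 k j) /\
     (exists s : seq (nat * int),
        uniq s /\
        (forall c, (c \in s) =
           validI nx ny p.1 c.1 c.2 && (c.2 * nz%:Z + l == 0 %[mod ny%:Z])%Z) /\
        size s = (nx - 1)%N)) /\
  (forall (l : int) (p q : R * R),
     in_torus p -> in_torus q ->
     adjacent_across (singular nx ny nz) (horiz_line nx l) p q ->
     (forall k j, validI nx ny p.1 k j = validI nx ny q.1 k j) /\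
     (forall k j, validI nx ny p.1 k j ->
        overI nx ny nz p.1 p.2 k j = overI nx ny nz q.1 q.2 k j) /\
     (forall k j, validII R nx ny k j ->
        (overII nx ny nz p.2 k j != overII nx ny nz q.2 k j)
        = (j * nz%:Z + l == 0 %[mod nx%:Z])%Z) /\
     (exists s : seq (nat * int),
        uniq s /\
        (forall c, (c \in s) =
           validII R nx ny c.1 c.2 && (c.2 * nz%:Z + l == 0 %[mod nx%:Z])%Z) /\
        size s = (ny - 1)%N)).
Proof.
move=> nx0 ny0 nz0 _ cyz cxz; split=> l p q _ _.
- rewrite singular_arrangement // => adj; have [nAp [nAq _]] := adj.
  have [dpZ hpZ _] := not_arrangement_int nAp; have [dqZ hqZ _] := not_arrangement_int nAq.
  have [flip eqH eqV] := adjacent_across_floors (transverse_diag_horiz _ _ nx0 nz0)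
    (transverse_diag_vert _ _ nx0 ny0) (fun x => proj1 (diag_lineE _ ny0 l x)) adj.
  split; [|split; [|split]] => [k j|k j /and4P[k1 kx _ _]|k j /and4P[k1 ky _ _]|].
  + exact: validI_floor_eq.
  + by apply: overI_flip => //; lia.
  + by apply: overII_stable => //; lia.
  + exact: typeI_congruence_count.
- rewrite singular_arrangement // arrangementCA => adj; have [nAp [nAq _]] := adj.
  have [hpZ dpZ _] := not_arrangement_int nAp; have [hqZ dqZ _] := not_arrangement_int nAq.
  have [flip eqD eqV] := adjacent_across_floors (transverse_horiz_diag _ _ nx0 nz0)
    (transverse_horiz_vert _ nx0) (fun x => proj1 (horiz_lineE nx0 l x)) adj.
  split; [|split; [|split]] => [k j|k j /and4P[k1 kx _ _]|k j /and4P[k1 ky _ _]|].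
  + exact: validI_floor_eq.
  + by apply: overI_stable => //; lia.
  + by apply: overII_flip => //; lia.
  + exact: typeII_congruence_count.
Qed.
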